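(* Let $n,b$ be integers with $1<n<b$, let $p=(d_k,\ldots,d_0)_b=n\cdot(d_{\sigma(k)},\ldots,d_{\sigma(0)})_b$ be an $(n,b,\sigma)$-permutiple with carries $c_k,\ldots,c_1,c_0=0$, and let $S=\bigl((c_0,c_1),\ldots,(c_{k-1},c_k),(c_k,c_0)\bigr)$ be its state-transition sequence. Let $\varphi$ be a symmetry of $p$ which fixes $S$, and let $\psi$ be the $(k+1)$-cycle $(0,1,\ldots,k)$. (a) If $0\le j\le k$ and $c_j=0$ (so that $p_{\psi^j}$ is a rotational sibling of $p$), then $\varphi\psi^j$ is also a symmetry of $p$; in particular $(d_{\varphi\psi^j(k)},\ldots,d_{\varphi\psi^j(0)})_b=n\cdot(d_{\sigma\varphi\psi^j(k)},\ldots,d_{\sigma\varphi\psi^j(0)})_b$ is an $(n,b,\psi^{-j}\varphi^{-1}\sigma\varphi\psi^j)$-permutiple. (b) If $0<j\le k$ and $c_j=n-1$ (so that $\overline{p}_{\psi^j}$ is a reflective sibling of $p$), then $(\overline{d}_{\varphi\psi^j(k)},\ldots,\overline{d}_{\varphi\psi^j(0)})_b=n\cdot(\overline{d}_{\sigma\varphi\psi^j(k)},\ldots,\overline{d}_{\sigma\varphi\psi^j(0)})_b$, i.e. this number is an $(n,b,\psi^{-j}\varphi^{-1}\sigma\varphi\psi^j)$-permutiple.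
   Context: For digits $0\le e_i<b$, $(e_k,\ldots,e_0)_b=\sum_ie_ib^i$ (leading zero digits allowed). For a permutation $\tau$ of $\{0,\ldots,k\}$, $(e_k,\ldots,e_0)_b$ is an $(n,b,\tau)$-permutiple if $(e_k,\ldots,e_0)_b=n\cdot(e_{\tau(k)},\ldots,e_{\tau(0)})_b$. The carries of $p$ are $c_0=0$, $c_{i+1}=\lfloor (nd_{\sigma(i)}+c_i)/b\rfloor$ for $0\le i\le k$ (so $c_{k+1}=0$ and $n d_{\sigma(i)}-d_i+c_i=bc_{i+1}$). The permutiple string of $p$ is $s=(d_0,d_{\sigma(0)})\cdots(d_k,d_{\sigma(k)})$. A permutation $\varphi$ of $\{0,\ldots,k\}$ is a symmetry of $p$ if $(d_{\varphi(k)},\ldots,d_{\varphi(0)})_b=n\cdot(d_{\sigma\varphi(k)},\ldots,d_{\sigma\varphi(0)})_b$ (reordering the inputs of $s$ by $\varphi$ yields another permutiple string). A symmetry $\varphi$ fixes $S$ if $S_\varphi=S$, where $S_\varphi=\bigl((c_{\varphi(0)},c_{\varphi(1)}),\ldots,(c_{\varphi(k-1)},c_{\varphi(k)}),(c_{\varphi(k)},c_{\varphi(0)})\bigr)$ is the state-transition (carry) sequence of the reordered string. $\psi(i)=i+1$ for $i<k$, $\psi(k)=0$. For a digit $d$, $\overline d=b-1-d$. The rotational sibling $p_{\psi^j}$ (for $c_j=0$) is $(d_{\psi^j(k)},\ldots,d_{\psi^j(0)})_b=n\cdot(d_{\sigma\psi^j(k)},\ldots,d_{\sigma\psi^j(0)})_b$,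 and the reflective sibling $\overline{p}_{\psi^j}$ (for $c_j=n-1$) is $(\overline d_{\psi^j(k)},\ldots,\overline d_{\psi^j(0)})_b=n\cdot(\overline d_{\sigma\psi^j(k)},\ldots,\overline d_{\sigma\psi^j(0)})_b$. *)

From mathcomp Require Import all_boot all_fingroup.
Set Implicit Arguments. Unset Strict Implicit. Unset Printing Implicit Defensive.
Local Open Scope nat_scope.

Section Permutiples.
Variable k : nat.
Notation I := 'I_k.+1.

Definition bval (b : nat) (e : I -> nat) : nat := \sum_(i < k.+1) e i * b ^ i.

Definition is_permutiple (n b : nat) (e : I -> nat) (tau : {perm I}) : Prop :=
  (forall i, e i < b) /\ bval b e = n * bval b (fun i => e (tau i)).

Fixpoint carry (n b : nat) (d : I -> nat) (sigma : {perm I}) (i : nat) : nat :=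
  match i with
  | 0 => 0
  | i'.+1 => (n * d (sigma (inord i')) + carry n b d sigma i') %/ b
  end.

(* psi(i) = i+1 for i<k, psi(k) = 0 : the (k+1)-cycle (0,1,...,k) *)
Definition psi : {perm I} := perm (@ordS_inj k.+1).

Definition state_seq (n b : nat) (d : I -> nat) (sigma phi : {perm I})
  : seq (nat * nat) :=
  [seq (carry n b d sigma (phi i), carry n b d sigma (phi (psi i))) | i <- enum I].

Definition is_symmetry (n b : nat) (d : I -> nat) (sigma phi : {perm I}) : Prop :=
  bval b (fun i => d (phi i)) = n * bval b (fun i => d (sigma (phi i))).

Definition fixes_S (n b : nat) (d : I -> nat) (sigma phi : {perm I}) : Prop :=
  state_seq n b d sigma phi = state_seq n b d sigma 1%g.

Definition dbar (b x : nat) : nat := b - 1 - x.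

End Permutiples.

From mathcomp Require Import all_boot all_fingroup zify.
Set Implicit Arguments. Unset Strict Implicit. Unset Printing Implicit Defensive.
Local Open Scope nat_scope.

(* Reading the column equations n d_{sigma i} + c_i = d_i + b c_{i+1} of a
   permutiple cyclically (c_{k+1} = 0 = c_0), every column becomes alike, and
   conversely a cyclic solution of these equations with a zero carry at column j
   yields a permutiple once the columns are rotated to start at j: the carry
   terms telescope.  A symmetry phi gives carries c' for the reordered string;
   comparing its columns with those of p at phi i modulo b shows c'_i = c_{phi i},
   which is c_i since phi fixes S.  Hence the reordered columns solve the cyclic
   equations with the carries of p, and rotating at c_j = 0 gives (a).  For (b),
   complementing digits and carries (d -> b-1-d, c -> n-1-c) preserves the cyclic
   equations and turns c_j = n-1 into a zero carry. *)

Lemma digit_carry_inj b x y A B :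
  x < b -> y < b -> x + b * A = y + b * B -> x = y /\ A = B.
Proof.
move=> x_lt y_lt eq_xy.
have x_eq_y : x = y.
  by rewrite -(modn_small x_lt) -(modn_small y_lt) -(modnMDl A x) -(modnMDl B y)
             ![_ * b]mulnC ![b * _ + _]addnC eq_xy.
split=> //; move: eq_xy; rewrite x_eq_y => /addnI /eqP.
by rewrite eqn_mul2l; case: eqP => [b0|_ /eqP //]; move: x_lt; rewrite b0.
Qed.

Lemma eq_bval k b (x y : 'I_k.+1 -> nat) : x =1 y -> bval b x = bval b y.
Proof. by move=> xy; apply: eq_bigr => i _; rewrite xy. Qed.

Section CyclicCarries.
Variables k n b : nat.
Implicit Types (e f c : 'I_k.+1 -> nat) (rho : {perm 'I_k.+1}).

Definition cyclic_carries e f c :=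
  forall i, n * f i + c i = e i + b * c (psi k i).

Lemma val_psi (i : 'I_k.+1) : val (psi k i) = i.+1 %% k.+1.
Proof. by rewrite /psi permE. Qed.

Lemma psi_ord_max : psi k ord_max = ord0.
Proof. by apply: val_inj; rewrite val_psi modnn. Qed.

Lemma val_psi_neq_max (i : 'I_k.+1) : i != ord_max -> val (psi k i) = i.+1.
Proof.
move=> ne_max; rewrite val_psi modn_small // ltnS ltn_neqAle -ltnS ltn_ord andbT.
by rewrite -val_eqE in ne_max.
Qed.

Lemma val_psiX (j : nat) (i : 'I_k.+1) : val ((psi k ^+ j)%g i) = (i + j) %% k.+1.
Proof.
rewrite permX; elim: j => [|j IH] /=; first by rewrite addn0 modn_small.
by rewrite val_psi IH -addn1 modnDml addn1 addnS.
Qed.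

Lemma psiX_ord0 (j : 'I_k.+1) : (psi k ^+ j)%g ord0 = j.
Proof. by apply: val_inj; rewrite val_psiX add0n modn_small. Qed.

Lemma bval_cyclic_carries e f c :
  cyclic_carries e f c -> c ord0 = 0 -> bval b e = n * bval b f.
Proof.
move=> hc c0.
have shift : \sum_(i < k.+1) c (psi k i) * b ^ i.+1 = \sum_(i < k.+1) c i * b ^ i.
  rewrite [RHS](reindex_inj (@perm_inj _ (psi k))); apply: eq_bigr => i _.
  have [->|ne_max] := eqVneq i ord_max; first by rewrite psi_ord_max c0 !mul0n.
  by rewrite val_psi_neq_max.
apply/eqP; rewrite -(eqn_add2r (\sum_(i < k.+1) c i * b ^ i)) -{1}shift /bval.
rewrite big_distrr -!big_split /=; apply/eqP/eq_bigr => i _.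
by rewrite mulnA -mulnDl hc mulnDl expnS mulnCA mulnA.
Qed.

Lemma cyclic_carries_comp e f c rho : commute rho (psi k) ->
  cyclic_carries e f c ->
  cyclic_carries (fun i => e (rho i)) (fun i => f (rho i)) (fun i => c (rho i)).
Proof. by move=> rho_psi hc i; rewrite hc -permM rho_psi permM. Qed.

Lemma bval_rotate e f c (j : 'I_k.+1) : cyclic_carries e f c -> c j = 0 ->
  bval b (fun i => e ((psi k ^+ j)%g i)) = n * bval b (fun i => f ((psi k ^+ j)%g i)).
Proof.
move=> hc cj0.
have psiX_psi : commute (psi k ^+ j) (psi k) := commute_sym (commuteX _ (commute_refl _)).
by apply: bval_cyclic_carries (cyclic_carries_comp psiX_psi hc) _; rewrite psiX_ord0.
Qed.

Lemma cyclic_carries_compl e f c :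
  (forall i, e i < b) -> (forall i, f i < b) -> (forall i, c i < n) ->
  cyclic_carries e f c ->
  cyclic_carries (fun i => dbar b (e i)) (fun i => dbar b (f i)) (fun i => n - 1 - c i).
Proof.
move=> e_lt f_lt c_lt hc i; have := hc i.
have := e_lt i; have := f_lt i; have := c_lt i; have := c_lt (psi k i).
rewrite /dbar; nia.
Qed.

Lemma cyclic_carries_reorder e f c c' rho :
  (forall i, c i < b) -> (forall i, c' i < b) -> (forall i, c (rho i) = c i) ->
  cyclic_carries e f c ->
  cyclic_carries (fun i => e (rho i)) (fun i => f (rho i)) c' ->
  cyclic_carries (fun i => e (rho i)) (fun i => f (rho i)) c.
Proof.
move=> c_lt c'_lt c_rho hc hc'.
have c'E i : c' i = c i.
  have [-> _] : c' i = c (rho i) /\ c (psi k (rho i)) = c' (psi k i).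
    by apply: digit_carry_inj; [exact: c'_lt | exact: c_lt | move: (hc (rho i)) (hc' i); lia].
  exact: c_rho.
by move=> i; rewrite -!c'E.
Qed.

End CyclicCarries.

Section CarriesOfPermutiple.
Variables (k n b : nat) (d : 'I_k.+1 -> nat) (tau : {perm 'I_k.+1}).
Implicit Types (e x : 'I_k.+1 -> nat).

Lemma carry_lt : 0 < n -> (forall i, d i < b) -> forall m, carry n b d tau m < n.
Proof.
move=> n_gt0 d_lt; elim=> [|m IH] //=.
have b_gt0 : 0 < b by apply: leq_ltn_trans (d_lt ord0).
by rewrite ltn_divLR // mulnC; have := d_lt (tau (inord m)); nia.
Qed.

Definition bval_drop x m := \sum_(m <= i < k.+1) x (inord i) * b ^ (i - m).

Lemma bval_drop0 x : bval_drop x 0 = bval b x.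
Proof. by rewrite /bval_drop big_mkord; apply: eq_bigr => i _; rewrite inord_val subn0. Qed.

Lemma bval_drop_size x : bval_drop x k.+1 = 0.
Proof. by rewrite /bval_drop big_geq. Qed.

Lemma bval_dropS x m : m <= k -> bval_drop x m = x (inord m) + b * bval_drop x m.+1.
Proof.
move=> m_le_k; rewrite /bval_drop big_ltn // subnn muln1 big_distrr /=.
congr (_ + _); apply: eq_big_nat => i /andP[m_lt_i _].
by rewrite mulnCA -expnS subnSK.
Qed.

Lemma bval_drop_carry e :
  (forall i, e i < b) -> bval b e = n * bval b (fun i => d (tau i)) ->
  forall m, m <= k.+1 ->
  bval_drop e m = carry n b d tau m + n * bval_drop (fun i => d (tau i)) m.
Proof.
move=> e_lt e_eq; elim=> [|m IH] m_le; first by rewrite !bval_drop0.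
have m_le_k : m <= k by [].
have b_gt0 : 0 < b by apply: leq_ltn_trans (e_lt ord0).
set s := n * d (tau (inord m)) + carry n b d tau m.
have split_s : e (inord m) + b * bval_drop e m.+1
             = s %% b + b * (s %/ b + n * bval_drop (fun i => d (tau i)) m.+1).
  rewrite -!bval_dropS // IH 1?ltnW // (bval_dropS _ m_le_k).
  have := divn_eq s b; rewrite /s; nia.
by have [_ ->] := digit_carry_inj (e_lt _) (ltn_pmod _ b_gt0) split_s.
Qed.

Lemma cyclic_carries_of_permutiple e :
  (forall i, e i < b) -> bval b e = n * bval b (fun i => d (tau i)) ->
  cyclic_carries n b e (fun i => d (tau i)) (fun i => carry n b d tau i).
Proof.
move=> e_lt e_eq i.
have drop_eq := bval_drop_carry e_lt e_eq.
have carry_next : carry n b d tau (psi k i) = carry n b d tau i.+1.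
  have [i_max|ne_max] := eqVneq i ord_max; last by rewrite val_psi_neq_max.
  rewrite i_max psi_ord_max.
  by have := drop_eq _ (leqnn _); rewrite !bval_drop_size muln0 addn0 => <-.
rewrite carry_next.
have := drop_eq _ (ltnW (ltn_ord i)); have := drop_eq i.+1 (ltn_ord i).
rewrite !(bval_dropS _ (ltn_ord i : i <= k)) !inord_val.
nia.
Qed.

End CarriesOfPermutiple.

Lemma fixes_S_carry k n b (d : 'I_k.+1 -> nat) (sigma phi : {perm 'I_k.+1}) :
  fixes_S n b d sigma phi -> forall i, carry n b d sigma (phi i) = carry n b d sigma i.
Proof.
move/eq_in_map => fixS i.
by have [] := fixS i (mem_enum _ i); rewrite perm1.
Qed.

Lemma is_permutiple_conj k n b (x : 'I_k.+1 -> nat) (sigma phi rho : {perm 'I_k.+1}) :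
  (forall i, x i < b) ->
  bval b (fun i => x (phi (rho i))) = n * bval b (fun i => x (sigma (phi (rho i)))) ->
  is_permutiple n b (fun i => x (phi (rho i))) (rho * phi * sigma * phi^-1 * rho^-1)%g.
Proof.
move=> x_lt x_eq; split=> //; rewrite x_eq; congr (_ * _).
by apply: eq_bval => i; rewrite !permM !permKV.
Qed.

Theorem theorem26 (n b k : nat) (d : 'I_k.+1 -> nat) (sigma phi : {perm 'I_k.+1}) :
  1 < n -> n < b ->
  is_permutiple n b d sigma ->
  is_symmetry n b d sigma phi ->
  fixes_S n b d sigma phi ->
  (forall j : 'I_k.+1, carry n b d sigma j = 0 ->
     is_symmetry n b d sigma (psi k ^+ j * phi)%g /\
     is_permutiple n b (fun i => d (phi ((psi k ^+ j)%g i)))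
       (psi k ^+ j * phi * sigma * phi^-1 * psi k ^- j)%g) /\
  (forall j : 'I_k.+1, 0 < j -> carry n b d sigma j = n - 1 ->
     is_permutiple n b (fun i => dbar b (d (phi ((psi k ^+ j)%g i))))
       (psi k ^+ j * phi * sigma * phi^-1 * psi k ^- j)%g).
Proof.
move=> n_gt1 n_lt_b [d_lt d_perm] d_sym d_fixS.
have c_lt_n := carry_lt sigma (ltnW n_gt1) d_lt.
have c'_lt_n := carry_lt phi (ltnW n_gt1) (fun i => d_lt (sigma i)).
have carries := cyclic_carries_of_permutiple d_lt d_perm.
have carries' := @cyclic_carries_of_permutiple k n b (fun i => d (sigma i)) phi
                   (fun i => d (phi i)) (fun i => d_lt _) d_sym.
have reordered := cyclic_carries_reorder (fun i => ltn_trans (c_lt_n i) n_lt_b)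
  (fun i => ltn_trans (c'_lt_n i) n_lt_b) (fixes_S_carry d_fixS) carries carries'.
split=> [j c_j | j _ c_j].
  have rotated := bval_rotate reordered c_j.
  split; last exact: is_permutiple_conj.
  rewrite /is_symmetry (eq_bval _ (fun i => congr1 d (permM _ _ i))).
  by rewrite (eq_bval _ (fun i => congr1 (fun y => d (sigma y)) (permM _ _ i))).
have complemented := cyclic_carries_compl (fun i => d_lt _) (fun i => d_lt _) c_lt_n reordered.
apply: (is_permutiple_conj (x := fun y => dbar b (d y))) => [y|]; first by rewrite /dbar; lia.
by apply: bval_rotate complemented _; rewrite /= c_j subnn.
Qed.
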